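(* Let $\mathcal{X}$ be a finite set, $P_X$ a probability distribution on $\mathcal{X}$, $\rho>0$, and let $\mathbf{X}=(X_1,\dots,X_n)$ be i.i.d. with law $P_X$. Let $\mathcal{A}$ be a nonempty countable set of agents; a strategy consists of, for each $a\in\mathcal{A}$, a (possibly random) sequence of guesses $\{\hat{\mathbf{X}}^{(a)}_k:k\ge1\}$ in $\mathcal{X}^n$ independent of $\mathbf{X}$. Let $\Pi$ be the set of bijections $\pi:\mathbb{N}^+\to\mathcal{A}\times\mathbb{N}^+$, and for $\pi(i)=(a_i,k_i)$ let $G(\mathbf{X},\pi(\hat{\mathbf{X}}_1^\infty))=\inf\{i\ge1:\hat{\mathbf{X}}^{(a_i)}_{k_i}=\mathbf{X}\}$. Let $G^*(\mathbf{X})$ be the position of $\mathbf{X}$ in the list of all elements of $\mathcal{X}^n$ sorted by decreasing probability under $P_X^{\otimes n}$ (ties broken arbitrarily). Then $$\inf_{\text{strategies}}\ \sup_{\pi\in\Pi}\ \mathbb{E}\big[G(\mathbf{X},\pi(\hat{\mathbf{X}}_1^\infty))^\rho\big]\ \ge\ \mathbb{E}\big[G^*(\mathbf{X})^\rho\big].$$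
   Context: Expectations are over $\mathbf{X}$ and the randomness of the guesses. *)

From HB Require Import structures.
From mathcomp Require Import all_boot all_order all_algebra.
From mathcomp Require Import all_classical all_reals all_analysis.
Set Implicit Arguments. Unset Strict Implicit. Unset Printing Implicit Defensive.
Import Order.TTheory GRing.Theory Num.Theory.
Local Open Scope ring_scope.
Local Open Scope classical_set_scope.

Definition prodP (R : realType) (X : finType) (P : X -> R) (n : nat)
  (x : n.-tuple X) : R := \prod_(i < n) P (tnth x i).

(* Indices are 0-based in Rocq: pi i is the (i+1)-th query, and the
   guess index k (in nat) stands for the (k+1)-th guess of an agent.
   The infimum of the empty set is +oo. *)
Definition guess_time (R : realType) (A T : Type) (pi : nat -> A * nat)
  (g : A -> nat -> T) (x : T) : \bar R :=
  ereal_inf [set ((i.+1)%:R)%:E | i in [set i : nat | g (pi i).1 (pi i).2 = x]].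

From HB Require Import structures.
From mathcomp Require Import all_boot all_order all_algebra.
From mathcomp Require Import all_classical all_reals all_analysis.
Set Implicit Arguments. Unset Strict Implicit. Unset Printing Implicit Defensive.
Import Order.TTheory GRing.Theory Num.Theory.
Local Open Scope ring_scope.

(* Fix one enumeration pi of the queries.  For every outcome of the guesses
   the cost sum_x P(x) G(x)^rho is either +oo (some word of positive
   probability is never guessed) or of the form sum_x P(x) f(h x), where
   f k = (k+1)^rho is nondecreasing and h x is the first query hitting x, so
   that h is injective on the words of positive probability.  Abel summation
   over the levels of f writes such a sum through the masses of the sets
   {x | h x <= j}.  At most j+1 words of positive probability have h x <= j, so
   each of these masses is at most the mass of the j+1 most likely words, which
   is the corresponding mass for the ranking sigma.  Hence the cost dominates
   E[G*(X)^rho] for every outcome, and so do its expectation and the supremum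
   over pi. *)

Section LayerCake.
Variable R : realType.

Lemma telescope_sum_lt (f : nat -> R) (M k : nat) : (k <= M)%N ->
  f k = f 0%N + \sum_(j < M | (j < k)%N) (f j.+1 - f j).
Proof.
move=> kM; have := telescope_sumr f (leq0n k).
by rewrite (big_nat_widen _ _ _ _ _ kM) big_mkord => ->; rewrite addrC subrK.
Qed.

Lemma sum_layer_cake (T : finType) (P : T -> R) (f : nat -> R) (k : T -> nat)
    (M : nat) : (forall x, k x <= M)%N ->
  \sum_x P x * f (k x) = f 0%N * \sum_x P x +
    \sum_(j < M) (f j.+1 - f j) * \sum_(x | (j < k x)%N) P x.
Proof.
move=> kM; under eq_bigr => x _ do rewrite (telescope_sum_lt f (kM x)) mulrDr.
rewrite big_split /= mulr_sumr; congr (_ + _).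
  by apply: eq_bigr => x _; rewrite mulrC.
under eq_bigr => x _ do rewrite mulr_sumr.
rewrite (exchange_big_dep xpredT) //=; apply: eq_bigr => j _.
by rewrite mulr_sumr; apply: eq_bigr => x _; rewrite mulrC.
Qed.

End LayerCake.

Lemma ler_sum_card_dominated (R : realType) (T : finType) (P : T -> R)
    (P_ge0 : forall x, 0 <= P x) (D1 D2 : {set T}) :
  (#|D1| <= #|D2|)%N -> (forall x y, x \in D1 -> y \in D2 -> P x <= P y) ->
  \sum_(x in D1) P x <= \sum_(y in D2) P y.
Proof.
move=> cD P12; have [D2_0 | D2_gt0] := posnP #|D2|.
  move: cD; rewrite D2_0 leqn0 => /eqP/cards0_eq ->.
  by rewrite big_set0 sumr_ge0.
rewrite -(ler_pMn2r D2_gt0) -sumr_const.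
apply: (@le_trans _ _ (\sum_(y in D2) \sum_(x in D1) P y)).
  by apply: ler_sum => y yD2; apply: ler_sum => x xD1; exact: P12.
under eq_bigr do rewrite sumr_const.
by rewrite sumrMnl ler_wpMn2l // sumr_ge0.
Qed.

Section FirstGuess.
Variables (R : realType) (A : Type) (T : eqType).
Variables (pi : nat -> A * nat) (gw : A -> nat -> T).

Local Open Scope ereal_scope.

Let query i := gw (pi i).1 (pi i).2.

(* Junk value [0] for a word that is never guessed. *)
Definition first_guess (x : T) : nat :=
  if pselect (exists i, query i == x) is left ex then ex_minn ex else 0%N.

Lemma first_guessP x : (exists i, query i == x) ->
  query (first_guess x) = x /\ forall i, query i = x -> (first_guess x <= i)%N.
Proof.
rewrite /first_guess; case: pselect => // ex _.
by case: ex_minnP => m /eqP qm m_min; split=> // i /eqP; apply: m_min.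
Qed.

Lemma guess_time_first_guess x : (exists i, query i == x) ->
  guess_time R pi gw x = (first_guess x).+1%:R%:E.
Proof.
move=> /first_guessP[qx x_min]; apply/le_anti/andP; split.
  by apply: ereal_inf_lbound; exists (first_guess x).
by apply/ereal_infP => _ [i qi <-]; rewrite lee_fin ler_nat ltnS x_min.
Qed.

Lemma guess_time_never x : (forall i, query i != x) ->
  guess_time R pi gw x = +oo.
Proof.
by move=> nx; apply/ereal_inf_pinfty => y [i /eqP qi _]; case/negP: (nx i).
Qed.

Lemma first_guess_inj x y : (exists i, query i == x) ->
  (exists i, query i == y) -> first_guess x = first_guess y -> x = y.
Proof.
by move=> /first_guessP[qx _] /first_guessP[qy _] fxy; rewrite -qx fxy qy.
Qed.

End FirstGuess.

Section Ranking.
Variables (R : realType) (T : finType) (P : T -> R).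
Hypothesis P_ge0 : forall x, 0 <= P x.
Variable sigma : T -> 'I_#|T|.
Hypothesis sigma_bij : bijective sigma.
Hypothesis sigma_sorted : forall x y, P y < P x -> (sigma x < sigma y)%N.

Lemma card_rank_head (j : nat) :
  (minn j.+1 #|T| <= #|[set x | (sigma x <= j)%N]|)%N.
Proof.
have [gi sigmaK giK] := sigma_bij.
have [T_small | T_large] := leqP #|T| j.+1.
  rewrite -[X in (X <= _)%N]cardsT; apply/subset_leq_card/fintype.subsetP => x _.
  by rewrite inE -ltnS (leq_trans (ltn_ord _) T_small).
pose F (i : 'I_j.+1) := gi (widen_ord (ltnW T_large) i).
have F_inj : injective F.
  by move=> i1 i2 /(can_inj giK)/(congr1 val) /= /val_inj.
have <- : #|F @: [set: 'I_j.+1]| = j.+1 by rewrite card_imset ?cardsT ?card_ord.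
apply/subset_leq_card/fintype.subsetP => _ /imsetP[i _ ->].
by rewrite inE /F giK /= -ltnS.
Qed.

Lemma sum_le_rank_head (S : {set T}) (j : nat) : (#|S| <= j.+1)%N ->
  \sum_(x in S) P x <= \sum_(x | (sigma x <= j)%N) P x.
Proof.
move=> S_small; set H := [set x | (sigma x <= j)%N].
have S_H : (#|S| <= #|H|)%N.
  by apply: leq_trans (card_rank_head j); rewrite leq_min S_small max_card.
rewrite -[X in _ <= X]big_set -/H (big_setID H) [X in _ <= X](big_setID S) /=.
rewrite finset.setIC lerD2l; apply: ler_sum_card_dominated => //.
  by move: S_H; rewrite -(cardsID H S) -(cardsID S H) finset.setIC leq_add2l.
move=> x y; rewrite !inE => /andP[xH _] /andP[_ yH].
rewrite leNgt; by apply: contra xH => /sigma_sorted/ltnW/leq_trans; apply.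
Qed.

Lemma rank_cost_le (f : nat -> R) (h : T -> nat) :
    {homo f : m n / (m <= n)%N >-> m <= n} ->
    {in [pred x | 0 < P x] &, injective h} ->
  \sum_x P x * f (sigma x) <= \sum_x P x * f (h x).
Proof.
move=> f_nd h_inj; set M := (#|T| + \sum_x h x)%N.
have hM x : (h x <= M)%N.
  by rewrite (leq_trans _ (leq_addl _ _)) // (bigD1 x) //= leq_addr.
have sigmaM x : (sigma x <= M)%N.
  by rewrite ltnW // (leq_trans (ltn_ord _) (leq_addr _ _)).
rewrite (sum_layer_cake P f sigmaM) (sum_layer_cake P f hM) lerD2l.
apply: ler_sum => j _; apply: ler_wpM2l; first by rewrite subr_ge0 f_nd.
have tail (k : T -> nat) :
    \sum_(x | (j < k x)%N) P x = \sum_x P x - \sum_(x | (k x <= j)%N) P x.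
  rewrite [X in _ = X - _](bigID (fun x => k x <= j)%N) /= addrAC subrr add0r.
  by apply: eq_bigl => x; rewrite ltnNge.
rewrite !tail lerD2l lerN2.
set S := [set x | (0 < P x) && (h x <= j)%N].
apply: le_trans (sum_le_rank_head (S := S) _).
  rewrite big_mkcond [X in _ <= X]big_mkcond /=; apply: ler_sum => x _.
  by rewrite inE; case: (h x <= j)%N; rewrite ?andbT ?andbF //; case: ltrP.
rewrite cardE -(size_map h) -[j.+1](size_iota 0); apply: uniq_leq_size.
  rewrite map_inj_in_uniq ?enum_uniq // => x y.
  by rewrite !mem_enum !inE => /andP[Px _] /andP[Py _]; apply: h_inj.
move=> y /mapP[x]; rewrite mem_enum inE => /andP[_ hx] ->.
by rewrite mem_iota add0n ltnS.
Qed.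

Local Open Scope ereal_scope.

Lemma rank_cost_le_guess_cost (rho : R) (A : Type) (pi : nat -> A * nat)
    (gw : A -> nat -> T) : (0 < rho)%R ->
  (\sum_x P x * (sigma x).+1%:R `^ rho)%R%:E <=
    \sum_x (P x)%:E * guess_time R pi gw x `^ rho.
Proof.
move=> rho_gt0; set query := fun i => gw (pi i).1 (pi i).2.
have [[x [Px_gt0 x_never]] | all_guessed] :=
  pselect (exists x, (0 < P x)%R /\ forall i, query i != x).
  rewrite [X in _ <= X](bigD1 x) //= guess_time_never // poweRyr ?gt_eqF //.
  rewrite gt0_muley ?lte_fin // addye ?leey //; apply/negbT/gt_eqF.
  apply: (lt_le_trans ltNy0); apply: sume_ge0 => y _.
  by apply: mule_ge0; rewrite ?lee_fin ?poweR_ge0.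
have guessed x : (0 < P x)%R -> exists i, query i == x.
  move=> Px_gt0; apply: contrapT => x_never; apply: all_guessed.
  by exists x; split=> // i; apply/negP => qi; apply: x_never; exists i.
have -> : \sum_x (P x)%:E * guess_time R pi gw x `^ rho =
    (\sum_x P x * (first_guess pi gw x).+1%:R `^ rho)%R%:E.
  rewrite -sumEFin; apply: eq_bigr => x _.
  have [/guessed/guess_time_first_guess-> | Px_le0] := ltrP 0%R (P x).
    by rewrite poweR_EFin EFinM.
  have -> : P x = 0%R by apply/le_anti; rewrite Px_le0 P_ge0.
  by rewrite mul0e mul0r.
rewrite lee_fin; apply: (@rank_cost_le (fun k => k.+1%:R `^ rho)%R).
  by move=> m k mk; rewrite ge0_ler_powR ?nnegrE ?ler_nat ?ltW.
by move=> x y; rewrite !inE => /guessed xg /guessed yg /first_guess_inj; apply.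
Qed.

End Ranking.

Local Open Scope classical_set_scope.

Lemma exists_bijective_nat_prod (A : countType) (a0 : A) :
  exists pi : nat -> A * nat, bijective pi.
Proof.
have AN_inf : infinite_set [set: A * nat].
  apply/infiniteP; have := @card_ge_preimage nat (A * nat) setT (pair a0).
  by rewrite preimage_setT; apply => ? ? _ _ [].
have /card_set_bijP[f] := eq_card_nat (countableP [set: A * nat]) AN_inf.
by rewrite setTT_bijective => -[g fK gK]; exists g; exists f.
Qed.

Local Open Scope ereal_scope.

(* The library's [ge0_le_integral] asks for measurability. *)
Lemma ge0_le_integralT d (T : measurableType d) (R : realType)
    (mu : {measure set T -> \bar R}) (f g : T -> \bar R) :
  (forall x, 0 <= f x) -> (forall x, f x <= g x) ->
  \int[mu]_x f x <= \int[mu]_x g x.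
Proof.
move=> f_ge0 fg; have g_ge0 x := le_trans (f_ge0 x) (fg x).
rewrite !ge0_integralTE //; apply: ereal_sup_le => _ [s sf <-].
by exists s => // x; apply: le_trans (sf x) (fg x).
Qed.

Theorem lemma1 (R : realType) (X : finType) (P : X -> R)
  (P_ge0 : forall x, (0 <= P x)%R) (P_sum : (\sum_(x : X) P x)%R = 1%R)
  (rho : R) (rho_gt0 : (0 < rho)%R) (n : nat)
  (A : countType) (A_ne : [set: A] !=set0)
  (d : measure_display) (Omega : measurableType d) (mu : probability Omega R)
  (g : Omega -> A -> nat -> n.-tuple X)
  (g_meas : forall a k x, measurable [set w | g w a k = x])
  (sigma : n.-tuple X -> 'I_#|{: n.-tuple X}|)
  (sigma_bij : bijective sigma)
  (sigma_sorted : forall x y : n.-tuple X,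
      (prodP P y < prodP P x)%R -> (sigma x < sigma y)%N) :
  ereal_sup [set \int[mu]_w
                 (\sum_(x : n.-tuple X)
                    (prodP P x)%:E * (guess_time R pi (g w) x) `^ rho)
            | pi in [set pi : nat -> A * nat | bijective pi]]
  >= \sum_(x : n.-tuple X) (prodP P x)%:E * (((sigma x).+1%:R `^ rho)%R)%:E.
Proof.
have [a0 _] := A_ne; have [pi pi_bij] := exists_bijective_nat_prod a0.
have prodP_ge0 (x : n.-tuple X) : (0 <= prodP P x)%R by apply: prodr_ge0.
set c := (\sum_(x : n.-tuple X) prodP P x * (sigma x).+1%:R `^ rho)%R.
have -> : \sum_x (prodP P x)%:E * ((sigma x).+1%:R `^ rho)%:E = c%:E.
  by rewrite -sumEFin; apply: eq_bigr => x _; rewrite EFinM.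
have c_ge0 : (0 <= c)%R.
  by apply: sumr_ge0 => x _; rewrite mulr_ge0 ?powR_ge0.
apply: (@le_trans _ _ (\int[mu]_w \sum_x
    (prodP P x)%:E * guess_time R pi (g w) x `^ rho)).
  rewrite -[c%:E]mule1 -(probability_setT mu) -integral_cst //.
  apply: ge0_le_integralT => [w|w]; first by rewrite lee_fin.
  exact: (rank_cost_le_guess_cost prodP_ge0 sigma_bij sigma_sorted pi (g w) rho_gt0).
by apply: ereal_sup_ubound; exists pi.
Qed.
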